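(* Let $V$ be a finite-dimensional $\Bbbk$-vector space and $\lambda$ a partition. The map $\mathrm{ad}\colon V\otimes\mathbb S_\lambda(V)\to\mathbb S_\lambda(\mathsf L_{(2)})$ induced by the Lie bracket is injective whenever $\lambda$ has at least two parts; when $\lambda=(n)$ with $n\ge1$, its kernel is isomorphic to $\mathbb S_{(n+1)}(V)=\mathrm{Sym}^{n+1}(V)$.
   Context: $\Bbbk$ is a field of characteristic $0$. $\mathsf L_{(2)}=V\oplus\bigwedge^2V$ is the free nilpotent Lie algebra of class $2$ on $V$. $\mathbb S_\lambda$ is the Schur functor; $\mathbb S_\lambda(V)\subset\mathbb S_\lambda(\mathsf L_{(2)})$ via $V\subset\mathsf L_{(2)}$, and $\mathsf L_{(2)}$ acts on $\mathbb S_\lambda(\mathsf L_{(2)})$ by functoriality from the adjoint action (so $X\in V$ acts as a derivation extending $Y\mapsto[X,Y]$); $\mathrm{ad}(X\otimes f)$ is the action of $X$ on $f$. *)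

From HB Require Import structures.
From mathcomp Require Import all_boot all_order all_fingroup all_algebra.
Set Implicit Arguments. Unset Strict Implicit. Unset Printing Implicit Defensive.
Import Order.TTheory GRing.Theory Num.Theory.
Local Open Scope ring_scope.

(* Conventions: V = F^d with standard basis e_0,...,e_(d-1), indexed by 'I_d.
   A tensor in W^{(x)m} (W a space with basis indexed by the finite type I)
   is its coordinate function on basis tensors e_(w_0) (x) ... (x) e_(w_(m-1)),
   i.e. an element of {ffun m.-tuple I -> F}. *)
Definition Tens (F : fieldType) (I : finType) (m : nat) : vectType F :=
  {ffun m.-tuple I -> F^o}.

Definition is_partition (lam : seq nat) : bool :=
  sorted geq lam && all (fun x => 0 < x)%N lam.

(* position (row, column) of the i-th box, boxes numbered row by row *)
Fixpoint cell (lam : seq nat) (i : nat) : nat * nat :=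
  match lam with
  | [::] => (0%N, i)
  | a :: l => if (i < a)%N then (0%N, i)
              else let rc := cell l (i - a) in (rc.1.+1, rc.2)
  end.

Definition rowGroup (lam : seq nat) : {set {perm 'I_(sumn lam)}} :=
  [set s : {perm 'I_(sumn lam)} | [forall i, (cell lam (s i)).1 == (cell lam i).1]].
Definition colGroup (lam : seq nat) : {set {perm 'I_(sumn lam)}} :=
  [set s : {perm 'I_(sumn lam)} | [forall i, (cell lam (s i)).2 == (cell lam i).2]].

Definition permT (F : fieldType) (I : finType) (m : nat) (s : {perm 'I_m})
  (t : Tens F I m) : Tens F I m :=
  [ffun w : m.-tuple I => t [tuple tnth w (s j) | j < m]].

Definition youngSym (F : fieldType) (I : finType) (lam : seq nat)
  (t : Tens F I (sumn lam)) : Tens F I (sumn lam) :=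
  \sum_(p in rowGroup lam) \sum_(q in colGroup lam)
     ((-1) ^+ odd_perm q : F) *: permT p (permT q t).

Definition SchurFun (F : fieldType) (I : finType) (lam : seq nat)
  : {vspace Tens F I (sumn lam)} :=
  limg (linfun (@youngSym F I lam)).

(* basis: inl i = e_i, inr (i,j) = e_i /\ e_j for i < j *)
Definition LIdx (d : nat) : finType :=
  ('I_d + {p : 'I_d * 'I_d | (p.1 < p.2)%N})%type.

(* structure constants: [b_a, b_b] = \sum_c br a b c * b_c *)
Definition br (F : fieldType) (d : nat) (a b c : LIdx d) : F :=
  match a, b, c with
  | inl i, inl j, inr p =>
      if val p == (i, j) then 1 else if val p == (j, i) then -1 else 0
  | _, _, _ => 0
  end.

(* the action of b_a on L^{(x)m} induced by the adjoint action (derivation) *)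
Definition actL (F : fieldType) (d m : nat) (a : LIdx d)
  (t : Tens F (LIdx d) m) : Tens F (LIdx d) m :=
  [ffun w : m.-tuple (LIdx d) =>
     \sum_(k < m) \sum_(b : LIdx d)
        br F a b (tnth w k) * t [tuple if j == k then b else tnth w j | j < m]].

Definition extT (F : fieldType) (d m : nat) (t : Tens F 'I_d m)
  : Tens F (LIdx d) m :=
  [ffun w : m.-tuple (LIdx d) =>
     \sum_(u : m.-tuple 'I_d) (if w == map_tuple inl u then t u else 0)].

(* V (x) V^{(x)m} is identified with V^{(x)(m+1)} (first factor = V) *)
Definition tens1 (F : fieldType) (d m : nat) (i : 'I_d) (f : Tens F 'I_d m)
  : Tens F 'I_d m.+1 :=
  [ffun w : m.+1.-tuple 'I_d => if thead w == i then f (behead_tuple w) else 0].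

Definition sliceT (F : fieldType) (d m : nat) (i : 'I_d) (t : Tens F 'I_d m.+1)
  : Tens F 'I_d m :=
  [ffun w : m.-tuple 'I_d => t [tuple of i :: w]].

(* ad : V (x) S_lam(V) -> S_lam(L),  X (x) f |-> X . f *)
Definition adMap (F : fieldType) (d m : nat) (t : Tens F 'I_d m.+1)
  : Tens F (LIdx d) m :=
  \sum_(i < d) actL (inl i) (extT (sliceT i t)).

(* the subspace V (x) S_lam(V) = \sum_i e_i (x) S_lam(V) *)
Definition VtensSchur (F : fieldType) (d : nat) (lam : seq nat)
  : {vspace Tens F 'I_d (sumn lam).+1} :=
  (\sum_(i < d) (linfun (@tens1 F d (sumn lam) i) @: (SchurFun F 'I_d lam)))%VS.

Definition adKer (F : fieldType) (d : nat) (lam : seq nat)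
  : {vspace Tens F 'I_d (sumn lam).+1} :=
  (VtensSchur F d lam :&: lker (linfun (@adMap F d (sumn lam))))%VS.

Definition glT (F : fieldType) (d m : nat) (g : 'M[F]_d) (t : Tens F 'I_d m)
  : Tens F 'I_d m :=
  [ffun w : m.-tuple 'I_d =>
     \sum_(u : m.-tuple 'I_d) (\prod_(k < m) g (tnth w k) (tnth u k)) * t u].

(* Identify V (x) V^{(x)m} with V^{(x)(m+1)}.  At a basis tensor whose only
   non-[V] factor is the wedge e_a /\ e_c in slot k, the coordinate of ad t is
   t(a, .., c, ..) - t(c, .., a, ..), and coordinates with two wedges vanish;
   hence ad t = 0 exactly when t is invariant under the transpositions (0 k),
   i.e. when t is a symmetric tensor.  The kernel of ad is therefore
   (V (x) S_lam V) \cap Sym^{m+1} V.  For lam = (n) the Young symmetrizer is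
   the full symmetrizer, so S_(n) V = Sym^n V and the kernel is Sym^{n+1} V.
   If lam has two rows, its column group contains an odd transposition, so
   symmetrizing any element of S_lam V gives 0: in characteristic 0 a
   symmetric tensor of S_lam V vanishes, and so does every slice of a
   kernel element. *)
From HB Require Import structures.
From mathcomp Require Import all_boot all_order all_fingroup all_algebra.
Set Implicit Arguments. Unset Strict Implicit. Unset Printing Implicit Defensive.
Import Order.TTheory GRing.Theory Num.Theory.
Local Open Scope ring_scope.

Definition repl (T : Type) m (u : m.-tuple T) (k : 'I_m) (a : T) : m.-tuple T :=
  [tuple if j == k then a else tnth u j | j < m].

Lemma tnth_repl (T : Type) m (u : m.-tuple T) k a j :
  tnth (repl u k a) j = if j == k then a else tnth u j.
Proof. by rewrite tnth_map tnth_ord_tuple. Qed.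

Lemma repl_repl (T : Type) m (u : m.-tuple T) k a c : repl (repl u k c) k a = repl u k a.
Proof. by apply: eq_from_tnth => j; rewrite !tnth_repl; case: eqP. Qed.

Lemma repl_tnth (T : Type) m (u : m.-tuple T) k : repl u k (tnth u k) = u.
Proof. by apply: eq_from_tnth => j; rewrite !tnth_repl; case: eqP => [->|]. Qed.

Lemma map_repl (T : Type) (U : Type) (f : T -> U) m (u : m.-tuple T) k a :
  map_tuple f (repl u k a) = repl (map_tuple f u) k (f a).
Proof.
apply: eq_from_tnth => j; rewrite tnth_map !tnth_repl tnth_map.
by case: eqP.
Qed.

Lemma tperm0_cons (T : Type) m (u : m.-tuple T) k a :
  [tuple tnth [tuple of a :: u] (tperm ord0 (lift ord0 k) j) | j < m.+1]
  = [tuple of tnth u k :: repl u k a].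
Proof.
apply: eq_from_tnth => j; rewrite tnth_map tnth_ord_tuple.
case: (unliftP ord0 j) => [j'|] ->; last by rewrite tpermL tnthS tnth0.
rewrite tnthS tnth_repl; case: (eqVneq j' k) => [->|ne_j'k]; first by rewrite tpermR tnth0.
by rewrite tpermD ?tnthS // (inj_eq (@lift_inj _ ord0)) eq_sym.
Qed.

Section PlaceAction.
Variables (F : fieldType) (I : finType).

Lemma permT_is_linear m s : linear (@permT F I m s).
Proof. by move=> a x y; apply/ffunP=> w; rewrite !ffunE. Qed.
HB.instance Definition _ m s :=
  GRing.isLinear.Build F _ _ _ (@permT F I m s) (@permT_is_linear m s).

Lemma permTM m (s1 s2 : {perm 'I_m}) (t : Tens F I m) :
  permT s1 (permT s2 t) = permT (s2 * s1) t.
Proof.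
apply/ffunP=> w; rewrite !ffunE; congr (t _); apply: eq_from_tnth => j.
by rewrite !tnth_map !tnth_ord_tuple permM.
Qed.

Lemma permT1 m (t : Tens F I m) : permT 1 t = t.
Proof.
apply/ffunP=> w; rewrite !ffunE; congr (t _); apply: eq_from_tnth => j.
by rewrite !tnth_map !tnth_ord_tuple perm1.
Qed.

Lemma youngSym_is_linear lam : linear (@youngSym F I lam).
Proof.
move=> a x y; rewrite /youngSym scaler_sumr -big_split; apply: eq_bigr => p _.
by rewrite scaler_sumr -big_split; apply: eq_bigr => q _; rewrite !linearP.
Qed.
HB.instance Definition _ lam :=
  GRing.isLinear.Build F _ _ _ (@youngSym F I lam) (@youngSym_is_linear lam).

Lemma memv_SchurFun lam (x : Tens F I (sumn lam)) :
  reflect (exists y, x = youngSym y) (x \in SchurFun F I lam).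
Proof.
apply: (iffP memv_imgP) => [[y _ ->]|[y ->]]; exists y; rewrite ?lfunE //.
exact: memvf.
Qed.

Definition symmetric_tensor m (t : Tens F I m) := forall s, permT s t = t.

Definition symmetrize m (t : Tens F I m) : Tens F I m :=
  \sum_(s : {perm 'I_m}) permT s t.

Lemma symmetrize_is_linear m : linear (@symmetrize m).
Proof.
move=> a x y; rewrite /symmetrize scaler_sumr -big_split.
by apply: eq_bigr => p _; rewrite linearP.
Qed.
HB.instance Definition _ m :=
  GRing.isLinear.Build F _ _ _ (@symmetrize m) (@symmetrize_is_linear m).

Lemma symmetrize_permT m s (t : Tens F I m) : symmetrize (permT s t) = symmetrize t.
Proof.
rewrite /symmetrize [RHS](reindex_inj (mulgI s)) /=.
by apply: eq_bigr => p _; rewrite permTM.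
Qed.

Lemma symmetrize_symmetric m (t : Tens F I m) :
  symmetric_tensor (symmetrize t).
Proof.
move=> s; rewrite /symmetrize linear_sum /= [RHS](reindex_inj (mulIg s)) /=.
by apply: eq_bigr => p _; rewrite permTM.
Qed.

Lemma symmetrize_id m (t : Tens F I m) :
  symmetric_tensor t -> symmetrize t = m`!%:R *: t.
Proof.
move=> st; rewrite /symmetrize (eq_bigr (fun _ => t)) // sumr_const.
by rewrite scaler_nat card_Sn.
Qed.

Lemma permT_tperm0_cons m (k : 'I_m) (t : Tens F I m.+1) (a : I) (u : m.-tuple I) :
  permT (tperm ord0 (lift ord0 k)) t [tuple of a :: u]
  = t [tuple of tnth u k :: repl u k a].
Proof. by rewrite ffunE tperm0_cons. Qed.

Lemma tperm0_invariantP m (t : Tens F I m.+1) :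
  (forall k, permT (tperm ord0 (lift ord0 k)) t = t) <->
  (forall k u a c, t [tuple of a :: repl u k c] = t [tuple of c :: repl u k a]).
Proof.
split=> [tperm0_t k u a c | swap_t k].
  by rewrite -{1}(tperm0_t k) permT_tperm0_cons repl_repl tnth_repl eqxx.
apply/ffunP => x; case/tupleP: x => a u.
by rewrite permT_tperm0_cons -swap_t repl_tnth.
Qed.

(* The (0 y) generate the symmetric group: (x y) is (0 y) conjugated by (0 x). *)
Lemma symmetric_tperm0 m (t : Tens F I m.+1) :
  (forall k, permT (tperm ord0 (lift ord0 k)) t = t) -> symmetric_tensor t.
Proof.
move=> tperm0_t.
have fixM s1 s2 : permT s1 t = t -> permT s2 t = t -> permT (s1 * s2) t = t.
  by move=> fix1 fix2; rewrite -permTM fix1 fix2.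
have tperm0_t' y : permT (tperm ord0 y) t = t.
  by case: (unliftP ord0 y) => [y'|] ->; rewrite ?tperm0_t // tperm1 permT1.
have tperm_t x y : permT (tperm x y) t = t.
  case: (unliftP ord0 x) => [x'|] ->; last exact: tperm0_t'.
  case: (unliftP ord0 y) => [y'|] ->; last by rewrite tpermC.
  case: (eqVneq x' y') => [->|ne_xy]; first by rewrite tperm1 permT1.
  have ne_lift : lift ord0 x' != lift ord0 y' by rewrite (inj_eq lift_inj).
  by rewrite -(tpermJ_tperm (neq_lift _ _) ne_lift) conjgE tpermV !fixM.
move=> s; have [ts -> _] := prod_tpermP s.
elim: ts => [|[x y] ts IH]; first by rewrite big_nil permT1.
by rewrite big_cons fixM.
Qed.

End PlaceAction.

Section YoungSymmetrizer.
Variables (F : fieldType) (I : finType).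
Hypothesis charF : [pchar F] =i pred0.

Lemma natr_fact_neq0 m : m`!%:R != 0 :> F.
Proof. by move/pcharf0P: charF => ->; rewrite -lt0n fact_gt0. Qed.

Lemma sum_sign_eq0 m (C : {set {perm 'I_m}}) (tau : {perm 'I_m}) :
  odd_perm tau -> (forall q, ((tau * q)%g \in C) = (q \in C)) ->
  \sum_(q in C) ((-1) ^+ odd_perm q : F) = 0.
Proof.
move=> odd_tau tauC; set S := \sum_(q in C) _.
have S_opp : S = - S.
  rewrite {1}/S (reindex_inj (mulgI tau)) /= -sumrN.
  apply: eq_big => [q|q _]; first by rewrite tauC.
  by rewrite odd_permM odd_tau signrN.
move/eqP: S_opp; rewrite -subr_eq0 opprK -mulr2n -mulr_natr mulf_eq0.
by case/orP=> /eqP // /eqP; move/pcharf0P: charF => ->.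
Qed.

Lemma colGroupM lam : {in colGroup lam &, forall p q, (p * q)%g \in colGroup lam}.
Proof.
move=> p q; rewrite !inE => /forallP pC /forallP qC; apply/forallP => i.
by rewrite permM (eqP (qC _)) (eqP (pC _)).
Qed.

Lemma symmetrize_youngSym_eq0 a b l (y : Tens F I (sumn [:: a, b & l])) :
  (0 < a)%N -> (0 < b)%N -> symmetrize (youngSym y) = 0.
Proof.
move=> a_gt0 b_gt0; set lam := [:: a, b & l].
have lt0 : (0 < sumn lam)%N by rewrite /= addn_gt0 a_gt0.
have lta : (a < sumn lam)%N by rewrite /= -{1}(addn0 a) ltn_add2l addn_gt0 b_gt0.
pose tau := tperm (Ordinal lt0) (Ordinal lta).
have tau_col : tau \in colGroup lam.
  rewrite inE; apply/forallP => i.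
  by case: tpermP => [->|->|//]; rewrite /= ?a_gt0 ?ltnn ?subnn ?b_gt0.
have tauC q : ((tau * q)%g \in colGroup lam) = (q \in colGroup lam).
  apply/idP/idP => [|]; last exact: colGroupM.
  by move/(colGroupM tau_col); rewrite mulgA tperm2 mul1g.
have odd_tau : odd_perm tau by rewrite odd_tperm -val_eqE /= eq_sym -lt0n a_gt0.
rewrite /youngSym linear_sum big1 // => p _.
rewrite linear_sum; under eq_bigr => q _ do rewrite linearZ /= !symmetrize_permT.
by rewrite -scaler_suml (sum_sign_eq0 odd_tau tauC) scale0r.
Qed.

Lemma youngSym_row k (y : Tens F I (sumn [:: k])) : youngSym y = symmetrize y.
Proof.
have ltk (j : 'I_(sumn [:: k])) : (j < k)%N by case: j => j /=; rewrite addn0.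
have col1 : colGroup [:: k] = [set 1%g].
  apply/setP => s; rewrite !inE; apply/forallP/eqP => [sC | -> i]; last by rewrite perm1.
  apply/permP => i; apply: val_inj; move: (sC i); rewrite perm1 /= !ltk.
  by move/eqP.
have rowT : rowGroup [:: k] = setT.
  by apply/setP => s; rewrite !inE; apply/forallP => i; rewrite /= !ltk.
rewrite /youngSym rowT col1; apply: eq_big => [p|p _]; first by rewrite inE.
by rewrite big_set1 odd_perm1 expr0 scale1r permT1.
Qed.

Lemma SchurFun_row k (x : Tens F I (sumn [:: k])) :
  x \in SchurFun F I [:: k] <-> symmetric_tensor x.
Proof.
split=> [/memv_SchurFun [y ->]|sym_x].
  by rewrite youngSym_row; apply: symmetrize_symmetric.
apply/memv_SchurFun; exists ((sumn [:: k])`!%:R^-1 *: x).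
by rewrite youngSym_row linearZ /= symmetrize_id // scalerA mulVf ?scale1r ?natr_fact_neq0.
Qed.

Lemma SchurFun_symmetric_eq0 a b l (x : Tens F I (sumn [:: a, b & l])) :
  (0 < a)%N -> (0 < b)%N -> x \in SchurFun F I [:: a, b & l] ->
  symmetric_tensor x -> x = 0.
Proof.
move=> a_gt0 b_gt0 /memv_SchurFun [y def_x] sym_x.
have : (sumn [:: a, b & l])`!%:R *: x = 0.
  by rewrite -symmetrize_id // def_x symmetrize_youngSym_eq0.
by move/eqP; rewrite scaler_eq0 (negPf (natr_fact_neq0 _)) => /eqP.
Qed.

End YoungSymmetrizer.

Section Slices.
Variables (F : fieldType) (d : nat).

Lemma tens1_is_linear m i : linear (@tens1 F d m i).
Proof.
move=> a x y; apply/ffunP=> w; rewrite !ffunE.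
by case: ifP => _; rewrite ?ffunE // scaler0 addr0.
Qed.
HB.instance Definition _ m i :=
  GRing.isLinear.Build F _ _ _ (@tens1 F d m i) (@tens1_is_linear m i).

Lemma sliceT_is_linear m i : linear (@sliceT F d m i).
Proof. by move=> a x y; apply/ffunP=> w; rewrite !ffunE. Qed.
HB.instance Definition _ m i :=
  GRing.isLinear.Build F _ _ _ (@sliceT F d m i) (@sliceT_is_linear m i).

Lemma sliceT_tens1 m i j (f : Tens F 'I_d m) :
  sliceT j (tens1 i f) = if i == j then f else 0.
Proof.
apply/ffunP => w; rewrite !ffunE theadE eq_sym.
by case: eqP => _; rewrite ?ffunE //; congr (f _); apply: val_inj.
Qed.

Lemma sum_tens1_sliceT m (t : Tens F 'I_d m.+1) : \sum_i tens1 i (sliceT i t) = t.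
Proof.
apply/ffunP => w; rewrite sum_ffunE (bigD1 (thead w)) //= big1 ?addr0.
  by rewrite !ffunE eqxx; congr (t _); rewrite -tuple_eta.
by move=> i /negPf ne_i; rewrite ffunE eq_sym ne_i.
Qed.

Lemma memv_VtensSchur lam (t : Tens F 'I_d (sumn lam).+1) :
  t \in VtensSchur F d lam <-> forall j, sliceT j t \in SchurFun F 'I_d lam.
Proof.
split=> [/memv_sumP [ts ts_in ->] j | slices_t].
  rewrite linear_sum (bigD1 j) //= big1 => [|i ne_ij].
    by have /memv_imgP [f f_in ->] := ts_in j isT; rewrite lfunE sliceT_tens1 eqxx addr0.
  by have /memv_imgP [f _ ->] := ts_in i isT; rewrite lfunE sliceT_tens1 (negPf ne_ij).
rewrite -[t]sum_tens1_sliceT; apply: memv_sumr => i _.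
have -> : tens1 i (sliceT i t) = linfun (@tens1 F d (sumn lam) i) (sliceT i t).
  by rewrite lfunE.
exact: memv_img.
Qed.

Lemma sliceT_symmetric m (t : Tens F 'I_d m.+1) i :
  symmetric_tensor t -> symmetric_tensor (sliceT i t).
Proof.
move=> sym_t s; apply/ffunP => w; rewrite !ffunE -[in RHS](sym_t (lift_perm ord0 ord0 s)).
rewrite ffunE; congr (t _); apply: eq_from_tnth => j; rewrite !tnth_map !tnth_ord_tuple.
case: (unliftP ord0 j) => [j'|] ->; last by rewrite lift_perm_id !tnth0.
by rewrite lift_perm_lift !tnthS tnth_map tnth_ord_tuple.
Qed.

End Slices.

Section Adjoint.
Variables (F : fieldType) (d : nat).

Lemma extT_is_linear m : linear (@extT F d m).
Proof.
move=> a x y; apply/ffunP=> w; rewrite !ffunE scaler_sumr -big_split.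
apply: eq_bigr => u _; case: ifP => _; rewrite ?ffunE // scaler0; exact: (esym (addr0 _)).
Qed.
HB.instance Definition _ m :=
  GRing.isLinear.Build F _ _ _ (@extT F d m) (@extT_is_linear m).

Lemma actL_is_linear m b : linear (@actL F d m b).
Proof.
move=> a x y; apply/ffunP=> w; rewrite !ffunE scaler_sumr -big_split.
apply: eq_bigr => k _; rewrite scaler_sumr -big_split; apply: eq_bigr => c _.
by rewrite !ffunE mulrDr mulrCA.
Qed.
HB.instance Definition _ m b :=
  GRing.isLinear.Build F _ _ _ (@actL F d m b) (@actL_is_linear m b).

Lemma adMap_is_linear m : linear (@adMap F d m).
Proof.
move=> a x y; rewrite /adMap scaler_sumr -big_split.
by apply: eq_bigr => i _; rewrite !linearP.
Qed.
HB.instance Definition _ m :=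
  GRing.isLinear.Build F _ _ _ (@adMap F d m) (@adMap_is_linear m).

Lemma extT_map_inl m (f : Tens F 'I_d m) u : extT f (map_tuple inl u) = f u.
Proof.
rewrite ffunE (bigD1 u) //= eqxx big1 ?addr0 // => v ne_vu.
case: eqP => // /(congr1 val) /= /(inj_map (@inl_inj _ _)) eq_uv.
by move: ne_vu; rewrite (val_inj eq_uv) eqxx.
Qed.

Lemma extT_inr m (f : Tens F 'I_d m) w j q : tnth w j = inr q -> extT f w = 0.
Proof.
move=> w_j; rewrite ffunE big1 // => u _.
by case: eqP => // def_w; move: w_j; rewrite def_w tnth_map.
Qed.

Lemma sum_br_wedge (p : {p : 'I_d * 'I_d | (p.1 < p.2)%N}) (E : 'I_d -> 'I_d -> F) :
  \sum_i \sum_j br F (inl i) (inl j) (inr p) * E i j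
  = E (val p).1 (val p).2 - E (val p).2 (val p).1.
Proof.
case: p => [[a c] /= lt_ac]; rewrite pair_bigA /=.
have ne_ca : (c, a) != (a, c) by rewrite xpair_eqE eq_sym andbb -val_eqE ltn_eqF.
rewrite (bigD1 (a, c)) // (bigD1 (c, a)) //= big1 ?addr0.
  by rewrite eqxx eq_sym (negPf ne_ca) mul1r mulN1r.
case=> i j /andP [ne_ac' ne_ca']; rewrite /= !xpair_eqE in ne_ac' ne_ca' *.
by rewrite !(eq_sym a) !(eq_sym c) (negPf ne_ac') andbC (negPf ne_ca') mul0r.
Qed.

(* The slot-k summand of the coordinate of [adMap t] at w: a bracket [e_i, b]
   is nonzero only at wedges. *)
Definition wedge_coord m (t : Tens F 'I_d m.+1) (w : m.-tuple (LIdx d)) (k : 'I_m) : F :=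
  if tnth w k is inr p then
    extT (sliceT (val p).1 t) (repl w k (inl (val p).2))
    - extT (sliceT (val p).2 t) (repl w k (inl (val p).1))
  else 0.

Lemma adMap_coord m (t : Tens F 'I_d m.+1) w :
  adMap t w = \sum_k wedge_coord t w k.
Proof.
rewrite sum_ffunE; under eq_bigr => i _ do rewrite ffunE.
rewrite exchange_big; apply: eq_bigr => k _; rewrite /wedge_coord.
case: (tnth w k) => [x|p].
  by rewrite big1 // => i _; rewrite big1 // => -[j|q] _; rewrite mul0r.
rewrite -(sum_br_wedge p (fun i j => extT (sliceT i t) (repl w k (inl j)))).
apply: eq_bigr => i _; rewrite big_sumType /= [X in _ + X]big1 ?addr0 //.
by move=> q _; rewrite mul0r.
Qed.

Lemma wedge_coord_two_wedges m (t : Tens F 'I_d m.+1) w k j q :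
  j != k -> tnth w j = inr q -> wedge_coord t w k = 0.
Proof.
move=> ne_jk w_j; rewrite /wedge_coord; case: (tnth w k) => // p.
have repl_j b : tnth (repl w k (inl b)) j = inr q by rewrite tnth_repl (negPf ne_jk).
by rewrite !(extT_inr _ (repl_j _)) subrr.
Qed.

Lemma wedge_coord_single m (t : Tens F 'I_d m.+1) u k p :
  wedge_coord t (repl (map_tuple inl u) k (inr p)) k
  = t [tuple of (val p).1 :: repl u k (val p).2]
    - t [tuple of (val p).2 :: repl u k (val p).1].
Proof.
by rewrite /wedge_coord tnth_repl eqxx !repl_repl -!map_repl !extT_map_inl !ffunE.
Qed.

Lemma single_wedgeP m (w : m.-tuple (LIdx d)) k p : tnth w k = inr p ->
  (exists u, w = repl (map_tuple inl u) k (inr p)) \/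
  (exists j q, j != k /\ tnth w j = inr q).
Proof.
move=> w_k; pose u := [tuple if tnth w j is inl x then x else (val p).1 | j < m].
case: (boolP [forall j, tnth w j == tnth (repl (map_tuple inl u) k (inr p)) j]).
  by move/forallP => eq_w; left; exists u; apply: eq_from_tnth => j; apply/eqP.
rewrite negb_forall => /existsP [j]; rewrite tnth_repl tnth_map tnth_mktuple.
case: (eqVneq j k) => [->|ne_jk]; first by rewrite w_k eqxx.
case w_j: (tnth w j) => [x|q]; first by rewrite eqxx.
by right; exists j, q.
Qed.

Lemma adMap_eq0_swap m (t : Tens F 'I_d m.+1) k u (a c : 'I_d) :
  adMap t = 0 -> (a < c)%N ->
  t [tuple of a :: repl u k c] = t [tuple of c :: repl u k a].
Proof.
move=> ad_t lt_ac; pose p : {p : 'I_d * 'I_d | (p.1 < p.2)%N} := exist _ (a, c) lt_ac.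
pose w := repl (map_tuple inl u) k (inr p).
have /eqP := congr1 (fun f : Tens F (LIdx d) m => f w) ad_t.
rewrite /= ffunE adMap_coord (bigD1 k) //= big1 ?addr0 => [|j ne_jk].
  by rewrite (wedge_coord_single t u k p) subr_eq0 => /eqP.
by rewrite /wedge_coord tnth_repl (negPf ne_jk) tnth_map.
Qed.

Lemma adMap_eq0P m (t : Tens F 'I_d m.+1) :
  adMap t = 0 <-> symmetric_tensor t.
Proof.
split=> [ad_t | sym_t].
  apply/symmetric_tperm0/tperm0_invariantP => k u a c.
  case: (ltngtP a c) => [lt_ac|lt_ca|/val_inj -> //]; last first.
    by rewrite (adMap_eq0_swap _ _ ad_t lt_ca).
  exact: adMap_eq0_swap.
apply/ffunP => w; rewrite adMap_coord ffunE big1 // => k _.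
case w_k : (tnth w k) => [x|p]; first by rewrite /wedge_coord w_k.
case: (single_wedgeP w_k) => [[u ->] | [j [q [ne_jk w_j]]]]; last first.
  exact: wedge_coord_two_wedges ne_jk w_j.
have /tperm0_invariantP swap_t := fun k => sym_t (tperm ord0 (lift ord0 k)).
by rewrite wedge_coord_single swap_t subrr.
Qed.

End Adjoint.

Section Kernel.
Variables (F : fieldType) (d : nat).
Hypothesis charF : [pchar F] =i pred0.

Lemma memv_adKer lam (t : Tens F 'I_d (sumn lam).+1) :
  t \in adKer F d lam <->
  (forall j, sliceT j t \in SchurFun F 'I_d lam) /\ symmetric_tensor t.
Proof.
rewrite memv_cap memv_ker lfunE /=.
split=> [/andP [/memv_VtensSchur slices_t /eqP /adMap_eq0P //] | [slices_t sym_t]].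
by apply/andP; split; [apply/memv_VtensSchur | apply/eqP/adMap_eq0P].
Qed.

Lemma adKer_two_rows a b l : (0 < a)%N -> (0 < b)%N -> adKer F d [:: a, b & l] = 0%VS.
Proof.
move=> a_gt0 b_gt0; apply/eqP; rewrite -subv0; apply/subvP => t.
move/memv_adKer => [slices_t sym_t]; suff -> : t = 0 by apply: mem0v.
rewrite -[t]sum_tens1_sliceT big1 // => i _.
have sym_ti := sliceT_symmetric i sym_t.
by rewrite (SchurFun_symmetric_eq0 charF a_gt0 b_gt0 (slices_t i) sym_ti) linear0.
Qed.

Lemma adKer_row n : adKer F d [:: n] = SchurFun F 'I_d [:: n.+1].
Proof.
apply/vspaceP => t; apply/idP/idP => [/memv_adKer [_ sym_t] | sym_t].
  exact/(@SchurFun_row F _ charF n.+1).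
have {}sym_t := iffLR (@SchurFun_row F _ charF n.+1 t) sym_t.
apply/memv_adKer; split=> // j.
exact/(SchurFun_row charF)/sliceT_symmetric.
Qed.

End Kernel.

Unset Implicit Arguments.
Theorem mainTheorem15 (F : fieldType) (hF : [pchar F] =i pred0)
  (d : nat) (lam : seq nat) (hlam : is_partition lam) :
  ((2 <= size lam)%N -> adKer F d lam = 0%VS) /\
  (forall n : nat, lam = [:: n] -> (0 < n)%N ->
     exists f : 'Hom(Tens F 'I_d (sumn [:: n.+1]), Tens F 'I_d (sumn lam).+1),
       [/\ (f @: (SchurFun F 'I_d [:: n.+1]))%VS = adKer F d lam,
           (lker f :&: SchurFun F 'I_d [:: n.+1])%VS = 0%VS &
           forall g : 'M[F]_d, g \in unitmx ->
             forall x, x \in SchurFun F 'I_d [:: n.+1] ->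
               f (glT g x) = glT g (f x)]).
Proof.
split.
  case: lam hlam => [|a [|b l]] // /andP [_ /and3P [a_gt0 b_gt0 _]] _.
  exact: (adKer_two_rows d hF l a_gt0 b_gt0).
move=> n -> _; exists \1%VF; split.
- by rewrite lim1g (adKer_row d hF).
- by rewrite (eqP (introT lker0P _)) ?cap0v // => x y; rewrite !id_lfunE.
- by move=> g _ x _; rewrite !id_lfunE.
Qed.
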